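(* Let $R$ be a commutative ring with identity and $q(R)$ its classical ring of quotients. Then (1) $R$ is roughly reduced if and only if $q(R)$ is roughly reduced; (2) $R$ is roughly complemented if and only if $q(R)$ is roughly complemented.
   Context: For a ring $A$: $\mathfrak{N}(A)$ is the nilradical, $\mathrm{reg}(A)$ the regular elements, $q(A)$ the localization at $\mathrm{reg}(A)$, $\mathrm{areg}(A)=\{x: x+\mathfrak{N}(A)\in\mathrm{reg}(A/\mathfrak{N}(A))\}$, and $\eta(A)=\bigcup_{s\in\mathrm{areg}(A)}\mathrm{Ann}(s)$. $A$ is roughly reduced if $\eta(A)=\mathfrak{N}(A)$. $A$ is roughly complemented if for every $a\in A$ there is $b$ with $ab=0$ and $a+b\in\mathrm{areg}(A)$. *)

From HB Require Import structures.
From mathcomp Require Import all_boot all_order all_algebra.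
Set Implicit Arguments. Unset Strict Implicit. Unset Printing Implicit Defensive.
Import GRing.Theory.
Local Open Scope ring_scope.

Section Defs.
Variable A : comPzRingType.

Definition nilp (x : A) : Prop := exists n : nat, x ^+ n = 0.

Definition regular (x : A) : Prop := forall y : A, x * y = 0 -> y = 0.

(* areg(A) = { x | x + N(A) is regular in A/N(A) }, with the membership in
   reg(A/N(A)) unfolded: for all y, (x+N)(y+N) = 0 in A/N implies y+N = 0,
   i.e. x*y in N(A) implies y in N(A). *)
Definition areg (x : A) : Prop := forall y : A, nilp (x * y) -> nilp y.

Definition eta (y : A) : Prop := exists s : A, areg s /\ s * y = 0.

Definition roughly_reduced : Prop := forall y : A, eta y <-> nilp y.

Definition roughly_complemented : Prop :=
  forall a : A, exists b : A, a * b = 0 /\ areg (a + b).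

Definition is_unit (x : A) : Prop := exists y : A, x * y = 1.
End Defs.

(* (Q, f) is the classical ring of quotients q(R) of R: f : R -> Q is an
   injective ring morphism, images of regular elements of R are units of Q,
   and every element of Q has the form f(a) f(s)^-1 with s regular.
   This determines Q up to isomorphism over R (it is the localization of R
   at reg(R)). *)
Definition classical_quotient_ring (R Q : comPzRingType) (f : {rmorphism R -> Q}) : Prop :=
  [/\ injective f,
      (forall s : R, regular s -> is_unit (f s)) &
      (forall q : Q, exists a s : R, regular s /\ q * f s = f a)].

(* Every q in q(R) satisfies q f(s) = f(a) with s regular, so f(s) a unit.
   Nilpotence, areg and eta are unchanged by unit factors and reflected by f,
   which transfers rough reducedness both ways and rough complementation from
   R to q(R).  Conversely, if f(b)/f(s) complements f(a) in q(R), then ab = 0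
   and as + b is in areg(R); since ab = 0, (a + b)z nilpotent forces az and bz
   nilpotent, hence (as + b)z nilpotent, so a + b is in areg(R) too. *)
From mathcomp Require Import all_boot all_order all_algebra zify.
Import GRing.Theory.
Local Open Scope ring_scope.

Section Nilradical.
Context {A : comPzRingType}.
Implicit Types a b s u x y z : A.

Lemma exprn_eq0_leq {x m n} : x ^+ m = 0 -> (m <= n)%N -> x ^+ n = 0.
Proof. by move=> xm0 le_mn; rewrite -(subnK le_mn) exprD xm0 mulr0. Qed.

Lemma nilp_mulr x y : nilp x -> nilp (x * y).
Proof. by case=> n xn0; exists n; rewrite exprMn xn0 mul0r. Qed.

Lemma nilpD x y : nilp x -> nilp y -> nilp (x + y).
Proof.
case=> m xm0 [n yn0]; exists (m + n)%N; rewrite exprDn big1 // => i _.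
have [le_ni | lt_in] := leqP n i.
  by rewrite (exprn_eq0_leq yn0 le_ni) mulr0 mul0rn.
suff le_m : (m <= m + n - i)%N by rewrite (exprn_eq0_leq xm0 le_m) mul0r mul0rn.
lia.
Qed.

Lemma nilp_sqr x : nilp (x ^+ 2) -> nilp x.
Proof. by case=> n x2n0; exists (2 * n)%N; rewrite exprM. Qed.

Lemma nilp_mulU x {u} : is_unit u -> (nilp (x * u) <-> nilp x).
Proof.
case=> v uv1; split; last exact: nilp_mulr.
by move=> /(nilp_mulr _ v); rewrite -mulrA uv1 mulr1.
Qed.

Lemma areg_mulU x {u} : is_unit u -> (areg (x * u) <-> areg x).
Proof.
move=> uU; split=> xR y xy_nil.
  by apply: xR; rewrite mulrAC (nilp_mulU _ uU).
by rewrite -(nilp_mulU _ uU); apply: xR; rewrite mulrA mulrAC.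
Qed.

Lemma mulU_eq0 x {u} : is_unit u -> (x * u = 0 <-> x = 0).
Proof.
case=> v uv1; split=> [xu0 | ->]; last exact: mul0r.
by rewrite -[x]mulr1 -uv1 mulrA xu0 mul0r.
Qed.

Lemma eta_mulU x {u} : is_unit u -> (eta (x * u) <-> eta x).
Proof.
move=> uU; split=> -[s [sR sx0]]; exists s; split=> //.
  by apply/(mulU_eq0 _ uU); rewrite -mulrA.
by rewrite mulrA sx0 mul0r.
Qed.

Lemma nilp_orthogonal_addl {a b z} :
  a * b = 0 -> nilp ((a + b) * z) -> nilp (a * z).
Proof.
move=> ab0 abz_nil; apply: nilp_sqr.
have -> : (a * z) ^+ 2 = (a + b) * z * (a * z).
  by rewrite expr2 !mulrDl [b * z * _]mulrACA (mulrC b a) ab0 mul0r addr0.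
exact: nilp_mulr.
Qed.

Lemma areg_orthogonal_add a b s : a * b = 0 -> areg (a * s + b) -> areg (a + b).
Proof.
move=> ab0 asbR z abz_nil; apply: asbR.
have az_nil := nilp_orthogonal_addl ab0 abz_nil.
have bz_nil : nilp (b * z).
  by apply: (nilp_orthogonal_addl (b := a)); [rewrite mulrC | rewrite addrC].
by rewrite mulrDl mulrAC; apply: nilpD; first exact: nilp_mulr.
Qed.

End Nilradical.

Section InjectiveMorphism.
Context {R S : comPzRingType} {f : {rmorphism R -> S}}.
Hypothesis f_inj : injective f.

Lemma rmorph_eq0 x : f x = 0 <-> x = 0.
Proof.
by split=> [/eqP | ->]; [rewrite raddf_eq0 // => /eqP | exact: rmorph0].
Qed.

Lemma nilp_rmorph x : nilp (f x) <-> nilp x.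
Proof.
split=> -[n xn0]; exists n; last by rewrite -rmorphXn xn0 rmorph0.
by apply/rmorph_eq0; rewrite rmorphXn.
Qed.

End InjectiveMorphism.

Section ClassicalQuotientRing.
Context {R Q : comPzRingType} {f : {rmorphism R -> Q}}.
Hypothesis qR : classical_quotient_ring f.

Let f_inj : injective f. Proof. by case: qR. Qed.

Let unit_regular {s} : regular s -> is_unit (f s).
Proof. by case: qR => _ + _; apply. Qed.

Let fraction q : exists a s, regular s /\ q * f s = f a.
Proof. by case: qR => _ _. Qed.

Lemma areg_rmorph x : areg (f x) <-> areg x.
Proof.
split=> xR y.
  by rewrite -!(nilp_rmorph f_inj) rmorphM; apply: xR.
have [c [s [sR ysc]]] := fraction y.
rewrite -(nilp_mulU y (unit_regular sR)) ysc (nilp_rmorph f_inj).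
move=> /(nilp_mulr _ (f s)); rewrite -mulrA ysc -rmorphM (nilp_rmorph f_inj).
exact: xR.
Qed.

Lemma eta_rmorph x : eta (f x) <-> eta x.
Proof.
split=> -[t [tR tx0]]; last first.
  by exists (f t); split; [apply/areg_rmorph | rewrite -rmorphM tx0 rmorph0].
have [b [s [sR tsb]]] := fraction t.
exists b; split.
  by rewrite -areg_rmorph -tsb areg_mulU //; apply: unit_regular.
by apply/(rmorph_eq0 f_inj); rewrite rmorphM -tsb mulrAC tx0 mul0r.
Qed.

Lemma roughly_reduced_quotient : roughly_reduced R <-> roughly_reduced Q.
Proof.
split=> red x.
  have [a [s [sR xsa]]] := fraction x.
  rewrite -(eta_mulU _ (unit_regular sR)) -(nilp_mulU _ (unit_regular sR)) xsa.
  by rewrite eta_rmorph (nilp_rmorph f_inj).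
by rewrite -eta_rmorph -(nilp_rmorph f_inj).
Qed.

Lemma roughly_complemented_quotient :
  roughly_complemented R -> roughly_complemented Q.
Proof.
move=> compl x; have [a [s [sR xsa]]] := fraction x.
have [v fsv1] := unit_regular sR.
have {xsa} -> : x = f a * v by rewrite -xsa -mulrA fsv1 mulr1.
have [b [ab0 abR]] := compl a.
have vU : is_unit v by exists (f s); rewrite mulrC.
exists (f b * v); split; first by rewrite mulrACA -rmorphM ab0 rmorph0 mul0r.
by rewrite -mulrDl -rmorphD areg_mulU // areg_rmorph.
Qed.

Lemma roughly_complemented_of_quotient :
  roughly_complemented Q -> roughly_complemented R.
Proof.
move=> compl a; have [y [ay0 ayR]] := compl (f a).
have [b [s [sR ysb]]] := fraction y.
have ab0 : a * b = 0.
  by apply/(rmorph_eq0 f_inj); rewrite rmorphM -ysb mulrA ay0 mul0r.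
exists b; split=> //; apply: (areg_orthogonal_add a b s ab0).
rewrite -areg_rmorph rmorphD rmorphM -ysb -mulrDl areg_mulU //.
exact: unit_regular.
Qed.

End ClassicalQuotientRing.

Theorem mainTheorem19 (R Q : comPzRingType) (f : {rmorphism R -> Q}) :
  classical_quotient_ring f ->
  (roughly_reduced R <-> roughly_reduced Q) /\
  (roughly_complemented R <-> roughly_complemented Q).
Proof.
move=> qR; split; first exact: (roughly_reduced_quotient qR).
split; first exact: (roughly_complemented_quotient qR).
exact: (roughly_complemented_of_quotient qR).
Qed.
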